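(* Let $K$ be a field, $B$ the algebra of upper triangular $2\times2$ matrices over $K$, and $A=M_3(K)$, with $B$ embedded in $A$ via $\begin{pmatrix}x&y\\0&z\end{pmatrix}\mapsto\begin{pmatrix}x&0&0\\0&x&y\\0&0&z\end{pmatrix}$ (this is left multiplication $B\to\mathrm{End}(B_K)\cong M_3(K)$ in the ordered basis $e_{11},e_{12},e_{22}$). Then ${}_BA$ is free of rank $3$, $A\otimes_BA\cong A^3$ as $A$-$A$-bimodules (so $A\| B$ is H-separable, in particular D2), but $A\| B$ is not a Frobenius extension and there is no $B$-$B$-bimodule projection $A\to B$.
   Context: An algebra extension $A\| B$ is H-separable if $A\otimes_BA$ is isomorphic as an $A$-$A$-bimodule to a direct summand of a finite direct sum $A^n$. It is a Frobenius extension if $A_B$ is finitely generated projective and $A\cong\mathrm{Hom}(A_B,B_B)$ as $B$-$A$-bimodules. It is D2 if $A\otimes_BA$ is isomorphic to a direct summand of some $A^n$ both as $A$-$B$-bimodules and as $B$-$A$-bimodules. *)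

From HB Require Import structures.
From mathcomp Require Import all_boot all_order all_algebra.
Set Implicit Arguments. Unset Strict Implicit. Unset Printing Implicit Defensive.
Import GRing.Theory.
Local Open Scope ring_scope.

Definition iotaB (K : fieldType) (b : 'M[K]_2) : 'M[K]_3 :=
  b 0 0 *: (delta_mx 0 0 + delta_mx 1 1) + b 0 1 *: delta_mx 1 2
  + b 1 1 *: delta_mx 2 2.

Definition inB (K : fieldType) (a : 'M[K]_3) : Prop :=
  exists b : 'M[K]_2, b 1 0 = 0 /\ a = iotaB b.

Definition left_free_rank (K : fieldType) (n : nat) : Prop :=
  exists v : 'I_n -> 'M[K]_3,
    (forall x : 'M[K]_3, exists c : 'I_n -> 'M[K]_3,
        (forall i, inB (c i)) /\ x = \sum_i c i * v i) /\
    (forall c : 'I_n -> 'M[K]_3, (forall i, inB (c i)) ->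
        \sum_i c i * v i = 0 -> forall i, c i = 0).

Definition balanced (K : fieldType) (V : lmodType K)
    (f : 'M[K]_3 -> 'M[K]_3 -> V) : Prop :=
  (forall (k : K) x x' y, f (k *: x + x') y = k *: f x y + f x' y) /\
  (forall (k : K) x y y', f x (k *: y + y') = k *: f x y + f x y') /\
  (forall x b y, inB b -> f (x * b) y = f x (b * y)).

Definition is_tensorB (K : fieldType) (M : lmodType K)
    (t : 'M[K]_3 -> 'M[K]_3 -> M) : Prop :=
  balanced t /\
  forall (V : lmodType K) (f : 'M[K]_3 -> 'M[K]_3 -> V), balanced f ->
    exists g : M -> V,
      (forall (k : K) m m', g (k *: m + m') = k *: g m + g m') /\
      (forall x y, g (t x y) = f x y) /\
      (forall g' : M -> V,
         (forall (k : K) m m', g' (k *: m + m') = k *: g' m + g' m') ->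
         (forall x y, g' (t x y) = f x y) -> forall m, g' m = g m).

Definition tensor_iso_An (K : fieldType) (n : nat) : Prop :=
  exists t : 'M[K]_3 -> 'M[K]_3 -> {ffun 'I_n -> 'M[K]_3},
    is_tensorB t /\
    (forall c x y, t (c * x) y = [ffun i => c * t x y i]) /\
    (forall c x y, t x (y * c) = [ffun i => t x y i * c]).

(* Elements of Hom(A_B, B_B): right B-linear maps A -> B (B viewed inside A). *)
Definition rHom (K : fieldType) (f : 'M[K]_3 -> 'M[K]_3) : Prop :=
  (forall a, inB (f a)) /\
  (forall a a', f (a + a') = f a + f a') /\
  (forall a b, inB b -> f (a * b) = f a * b).

(* A_B is finitely generated projective: A_B is a direct summand of B^n_B,
   i.e. there are a B-linear surjection B^n -> A, e_i |-> a i, and a B-linear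
   section A -> B^n, x |-> (f i x)_i. *)
Definition right_fg_projective (K : fieldType) : Prop :=
  exists n (a : 'I_n -> 'M[K]_3) (f : 'I_n -> 'M[K]_3 -> 'M[K]_3),
    (forall i, rHom (f i)) /\ (forall x, x = \sum_i a i * f i x).

(* Frobenius extension: A_B f.g. projective and A ~= Hom(A_B,B_B) as B-A-bimodules,
   where (b . f . a)(x) = b * f (a * x). *)
Definition frobenius_ext (K : fieldType) : Prop :=
  right_fg_projective K /\
  exists phi : 'M[K]_3 -> ('M[K]_3 -> 'M[K]_3),
    (forall a, rHom (phi a)) /\
    (forall a a' x, phi (a + a') x = phi a x + phi a' x) /\
    (forall b a c x, inB b -> phi (b * a * c) x = b * phi a (c * x)) /\
    (forall a a', (forall x, phi a x = phi a' x) -> a = a') /\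
    (forall f, rHom f -> exists a, forall x, phi a x = f x).

Definition bimodule_projection (K : fieldType) (E : 'M[K]_3 -> 'M[K]_3) : Prop :=
  (forall a, inB (E a)) /\
  (forall a a', E (a + a') = E a + E a') /\
  (forall b a b', inB b -> inB b' -> E (b * a * b') = b * E a * b') /\
  (forall b, inB b -> E b = b).

From HB Require Import structures.
From mathcomp Require Import all_boot all_algebra ring.
Import GRing.Theory.
Set Implicit Arguments. Unset Strict Implicit. Unset Printing Implicit Defensive.
Local Open Scope ring_scope.

(* Write e_ij for the matrix units (indices 0..2) and let B act on column vectors.
   The vector (1,0,1)^T generates K^3 freely over B, so A, the sum of its three
   columns, is B-free with basis e_0j + e_2j.  The centralizer of B in A has basis
   c_0 = e_00, c_1 = e_10, c_2 = e_11 + e_22, and x (x) y |-> (x c_i y)_i is a balanced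
   map A x A -> A^3.  It is universal: balancing reduces every e_pa (x) e_bq to a
   combination of the 27 tensors e_p0 (x) e_0q, e_p1 (x) e_0q, e_p1 (x) e_1q, which are
   sent to a basis of A^3.
   For the negative statements, the key is the element e_22 of B.  A right B-linear
   f : A -> B satisfies f(x) e_22 = f(x e_21) e_12, whose (2,2)-entry is 0; hence
   e_22 Hom(A_B, B_B) = 0 although e_22 A <> 0, which rules out A ~= Hom(A_B, B_B).
   A B-B-bimodule projection E would vanish on e_21 = e_22 e_21 (e_00 + e_11), since
   e_22 B (e_00 + e_11) = 0, hence on e_21 e_12 = e_22, which lies in B. *)

Section LinearMaps.
Variable R : pzRingType.

Definition linear_of (U V : lmodType R) (h : U -> V)
    (hL : forall k u u', h (k *: u + u') = k *: h u + h u') : {linear U -> V} :=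
  HB.pack h (GRing.isLinear.Build R U V *:%R h hL).

Lemma linear_sum_delta (V : lmodType R) m n (h : {linear 'M[R]_(m, n) -> V}) A :
  h A = \sum_i \sum_j A i j *: h (delta_mx i j).
Proof.
rewrite {1}(matrix_sum_delta A) linear_sum; apply: eq_bigr => i _.
by rewrite linear_sum; apply: eq_bigr => j _; rewrite linearZZ.
Qed.

Lemma bilinear_sum_delta (V : lmodType R) m n m' n'
    (f : 'M[R]_(m, n) -> 'M[R]_(m', n') -> V) :
  (forall k x x' y, f (k *: x + x') y = k *: f x y + f x' y) ->
  (forall k x y y', f x (k *: y + y') = k *: f x y + f x y') ->
  forall x y, f x y = \sum_p \sum_a \sum_b \sum_q
    (x p a * y b q) *: f (delta_mx p a) (delta_mx b q).
Proof.
move=> fL1 fL2 x y.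
have -> : f x y = \sum_p \sum_a x p a *: f (delta_mx p a) y :=
  linear_sum_delta (linear_of (fun k x x' => fL1 k x x' y)) x.
apply: eq_bigr => p _; apply: eq_bigr => a _.
have -> : f (delta_mx p a) y = \sum_b \sum_q y b q *: f (delta_mx p a) (delta_mx b q) :=
  linear_sum_delta (linear_of (fun k => fL2 k (delta_mx p a))) y.
rewrite scaler_sumr; apply: eq_bigr => b _; rewrite scaler_sumr; apply: eq_bigr => q _.
by rewrite scalerA.
Qed.

Lemma sum_scale_delta_mx (V : lmodType R) m n (F : 'I_m -> 'I_n -> V) c p q :
  \sum_i \sum_j (c *: delta_mx p q) i j *: F i j = c *: F p q.
Proof.
rewrite (bigD1 p) //= [X in _ + X]big1 => [|i /negbTE ip]; last first.
  by apply: big1 => j _; rewrite !mxE ip mulr0 scale0r.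
rewrite (bigD1 q) //= big1 => [|j /negbTE jq]; last by rewrite !mxE jq andbF mulr0 scale0r.
by rewrite !mxE !eqxx mulr1 !addr0.
Qed.

End LinearMaps.

Definition ffun_delta (I : finType) (V : nmodType) (i : I) (v : V) : {ffun I -> V} :=
  [ffun j => v *+ (i == j)].

Lemma ffun_sum_delta (I : finType) (V : nmodType) (m : {ffun I -> V}) :
  m = \sum_i ffun_delta i (m i).
Proof.
apply/ffunP => j; rewrite sum_ffunE (bigD1 j) //= big1 => [|i /negbTE ij].
  by rewrite ffunE eqxx mulr1n addr0.
by rewrite ffunE ij mulr0n.
Qed.

Lemma ord3P (i : 'I_3) : [\/ i = 0, i = 1 | i = 2].
Proof.
by case: i => [[|[|[|m]]] //= lti]; [constructor 1 | constructor 2 | constructor 3];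
  apply: val_inj.
Qed.

Lemma sum_ord3 (V : nmodType) (F : 'I_3 -> V) : \sum_(i < 3) F i = F 0 + F 1 + F 2.
Proof.
rewrite !big_ord_recl big_ord0 addr0 addrA.
by congr (F _ + F _ + F _); apply: val_inj.
Qed.

Ltac case_ord3 i := case: (ord3P i) => ->.

Ltac mx_ring := rewrite -?mulmxE; apply/matrixP;
  let r := fresh "r" in let s := fresh "s" in move=> r s;
  rewrite ?(mxE, sum_ord3, summxE); case_ord3 r; case_ord3 s; rewrite /=; ring.

Lemma delta_mul_mul (R : pzRingType) n (p a b q : 'I_n) (M : 'M[R]_n) :
  delta_mx p a *m M *m delta_mx b q = M a b *: delta_mx p q.
Proof.
apply/matrixP => r s; rewrite !mxE (bigD1 b) //= big1 => [|k /negbTE kb]; last first.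
  by rewrite [delta_mx b q k s]mxE kb mulr0.
rewrite addr0 !mxE (bigD1 a) //= big1 => [|l /negbTE la]; last by rewrite !mxE la andbF mul0r.
rewrite !mxE !eqxx !andbT addr0.
by case: (r == p); case: (s == q); rewrite /= ?(mul1r, mulr1, mul0r, mulr0).
Qed.

Section TriangularExtension.
Variable K : fieldType.

Definition emb (x y z : K) : 'M[K]_3 :=
  x *: (delta_mx 0 0 + delta_mx 1 1) + y *: delta_mx 1 2 + z *: delta_mx 2 2.

Lemma inB_emb x y z : inB (emb x y z).
Proof.
exists (x *: delta_mx 0 0 + y *: delta_mx 0 1 + z *: delta_mx 1 1); split.
  by rewrite !mxE /=; ring.
by rewrite /iotaB /emb !mxE /=; congr (_ *: _ + _ *: _ + _ *: _); ring.
Qed.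

Lemma inBP a : inB a -> exists x y z, a = emb x y z.
Proof. by case=> b [_ ->]; exists (b 0 0), (b 0 1), (b 1 1). Qed.

Lemma emb_mul x y z x' y' z' :
  emb x y z * emb x' y' z' = emb (x * x') (x * y' + y * z') (z * z').
Proof. rewrite /emb; mx_ring. Qed.

Lemma emb0 : emb 0 0 0 = 0.
Proof. by rewrite /emb !scale0r !addr0. Qed.

Lemma emb1 : emb 1 0 1 = 1.
Proof. rewrite /emb; mx_ring. Qed.

Lemma emb100 : emb 1 0 0 = delta_mx 0 0 + delta_mx 1 1.
Proof. by rewrite /emb !scale0r !addr0 scale1r. Qed.

Lemma emb010 : emb 0 1 0 = delta_mx 1 2.
Proof. by rewrite /emb !scale0r add0r addr0 scale1r. Qed.

Lemma emb001 : emb 0 0 1 = delta_mx 2 2.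
Proof. by rewrite /emb !scale0r !add0r scale1r. Qed.

Lemma emb_inj x y z x' y' z' :
  emb x y z = emb x' y' z' -> [/\ x = x', y = y' & z = z'].
Proof.
have coords u v w : [/\ emb u v w 0 0 = u, emb u v w 1 2 = v & emb u v w 2 2 = w].
  by rewrite /emb !mxE /= !(mulr0, mulr1, addr0, add0r).
move=> e; have [x0 y0 z0] := coords x y z; have [x1 y1 z1] := coords x' y' z'.
by split; [rewrite -x0 -x1 e | rewrite -y0 -y1 e | rewrite -z0 -z1 e].
Qed.

Lemma inB1 : inB (1 : 'M[K]_3).
Proof. by rewrite -emb1; apply: inB_emb. Qed.

Lemma inB_delta12 : inB (delta_mx 1 2 : 'M[K]_3).
Proof. by rewrite -emb010; apply: inB_emb. Qed.

Lemma inB_delta22 : inB (delta_mx 2 2 : 'M[K]_3).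
Proof. by rewrite -emb001; apply: inB_emb. Qed.

Lemma delta22_neq0 : delta_mx 2 2 != 0 :> 'M[K]_3.
Proof. by apply/eqP => /matrixP/(_ 2 2); rewrite !mxE /=; apply/eqP/oner_neq0. Qed.

Definition leftB_basis (j : 'I_3) : 'M[K]_3 := delta_mx 0 j + delta_mx 2 j.

Lemma emb_mul_leftB_basis (x y z : K) j :
  emb x y z * leftB_basis j = x *: delta_mx 0 j + y *: delta_mx 1 j + z *: delta_mx 2 j.
Proof.
rewrite /emb /leftB_basis -!mulmxE !mulmxDl !mulmxDr -!scalemxAl !mulmxDl.
rewrite !mul_delta_mx_cond /=.
by rewrite !mulr0n !mulr1n !(addr0, add0r, scaler0).
Qed.

Lemma leftB_basis_mul_delta k j : leftB_basis k * delta_mx j j = leftB_basis j *+ (k == j).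
Proof. by rewrite /leftB_basis -mulmxE mulmxDl !mul_delta_mx_cond -mulrnDl. Qed.

Lemma delta_col_eq0 (x y z : K) (j : 'I_3) :
  x *: delta_mx 0 j + y *: delta_mx 1 j + z *: delta_mx 2 j = 0 :> 'M[K]_3 ->
  [/\ x = 0, y = 0 & z = 0].
Proof.
move/matrixP=> e; have := e 0 j; have := e 1 j; have := e 2 j.
by rewrite !mxE /= !eqxx /= !(mulr0, mulr1, addr0, add0r) => -> -> ->.
Qed.

Lemma left_free_rank3 : left_free_rank K 3.
Proof.
exists leftB_basis; split=> [a | c cB sum0 i].
  exists (fun j => emb (a 0 j) (a 1 j) (a 2 j)); split=> [j|]; first exact: inB_emb.
  under eq_bigr do rewrite emb_mul_leftB_basis.
  rewrite {1}(matrix_sum_delta a) exchange_big /=.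
  by apply: eq_bigr => j _; rewrite sum_ord3.
have col_i : c i * leftB_basis i = 0.
  rewrite -(mul0r (delta_mx i i)) -sum0 mulr_suml (bigD1 i) //= big1 ?addr0.
    by rewrite -[RHS]mulrA leftB_basis_mul_delta eqxx mulr1n.
  by move=> k /negbTE ki; rewrite -[LHS]mulrA leftB_basis_mul_delta ki mulr0n mulr0.
have [x [y [z cxyz]]] := inBP (cB i).
by move: col_i; rewrite cxyz emb_mul_leftB_basis => /delta_col_eq0 [-> -> ->]; rewrite emb0.
Qed.

Lemma mul_delta22_rHom f (a : 'M[K]_3) : rHom f -> delta_mx 2 2 * f a = 0.
Proof.
case=> fB [_ fM].
have [p [q [r fx]]] := inBP (fB a).
have [p' [q' [r' fxw]]] := inBP (fB (a * delta_mx 2 1)).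
have : f a * delta_mx 2 2 = f (a * delta_mx 2 1) * delta_mx 1 2.
  rewrite -fM; last exact: inB_delta22.
  rewrite -fM; last exact: inB_delta12.
  by congr f; rewrite -!mulmxE -mulmxA mul_delta_mx.
rewrite fx fxw -emb001 -emb010 !emb_mul => /emb_inj [_ _].
rewrite mulr1 mulr0 => ->.
by rewrite !mul0r mulr0 addr0 emb0.
Qed.

Lemma not_frobenius_ext : ~ frobenius_ext K.
Proof.
case=> _ [phi [phiH [phiD [phiM [phi_inj _]]]]].
have phi0 a : phi 0 a = 0.
  by apply: (@addrI _ (phi 0 a)); rewrite -phiD !addr0.
apply: (elimN eqP delta22_neq0); apply: phi_inj => x.
rewrite phi0 -[delta_mx 2 2]mulr1 -[_ * 1]mulr1 phiM; last exact: inB_delta22.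
rewrite mul1r.
exact: mul_delta22_rHom.
Qed.

Lemma no_bimodule_projection :
  ~ exists E : 'M[K]_3 -> 'M[K]_3, bimodule_projection E.
Proof.
case=> E [EB [_ [EM Eid]]].
have inB_f : inB (delta_mx 0 0 + delta_mx 1 1 : 'M[K]_3).
  by rewrite -emb100; apply: inB_emb.
have sandwich b : inB b ->
    delta_mx 2 2 * b * (delta_mx 0 0 + delta_mx 1 1) = 0 :> 'M[K]_3.
  case/inBP=> p [q [r ->]]; rewrite -emb001 -emb100 !emb_mul.
  by rewrite !(mul0r, mulr0, addr0) emb0.
have E21 : E (delta_mx 2 1) = 0.
  have -> : delta_mx 2 1 =
      delta_mx 2 2 * delta_mx 2 1 * (delta_mx 0 0 + delta_mx 1 1) :> 'M[K]_3.
    by rewrite -!mulmxE mul_delta_mx mulmxDr !mul_delta_mx_cond /= mulr0n mulr1n add0r.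
  by rewrite (EM _ _ _ inB_delta22 inB_f); exact: sandwich (EB _).
apply: (elimN eqP delta22_neq0).
rewrite -(Eid _ inB_delta22) (_ : delta_mx 2 2 = 1 * delta_mx 2 1 * delta_mx 1 2).
  by rewrite (EM _ _ _ inB1 inB_delta12) E21 mulr0 mul0r.
by rewrite mul1r -mulmxE mul_delta_mx.
Qed.

Definition cent (i : 'I_3) : 'M[K]_3 :=
  if i == 0 then delta_mx 0 0 else if i == 1 then delta_mx 1 0
  else delta_mx 1 1 + delta_mx 2 2.

Lemma cent_comm b i : inB b -> b * cent i = cent i * b.
Proof. by case/inBP=> x [y [z ->]]; case_ord3 i; rewrite /cent /emb /=; mx_ring. Qed.

Definition lidx (i : 'I_3) : 'I_3 := if i == 0 then 0 else 1.
Definition ridx (i : 'I_3) : 'I_3 := if i == 2 then 1 else 0.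

Lemma cent_idx i j : cent j (lidx i) (ridx i) = (i == j)%:R.
Proof.
by case_ord3 i; case_ord3 j; rewrite /cent /lidx /ridx /= !mxE /= ?(mulr1n, mulr0n, addr0).
Qed.

Definition tensor_map (x y : 'M[K]_3) : {ffun 'I_3 -> 'M[K]_3} :=
  [ffun i => x * cent i * y].

Lemma tensor_map_balanced : balanced tensor_map.
Proof.
split=> [k x x' y | ]; first by apply/ffunP => i; rewrite !ffunE !mulrDl -!scalerAl.
split=> [k x y y' | x b y bB]; first by apply/ffunP => i; rewrite !ffunE mulrDr -!scalerAr.
by apply/ffunP => i; rewrite !ffunE -(mulrA x b) cent_comm // !mulrA.
Qed.

Lemma tensor_map_delta p a b q :
  tensor_map (delta_mx p a) (delta_mx b q) = [ffun i => cent i a b *: delta_mx p q].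
Proof. by apply/ffunP => i; rewrite !ffunE -!mulmxE delta_mul_mul. Qed.

Lemma tensor_map_idx i p q :
  tensor_map (delta_mx p (lidx i)) (delta_mx (ridx i) q) = ffun_delta i (delta_mx p q).
Proof. by rewrite tensor_map_delta; apply/ffunP => j; rewrite !ffunE cent_idx scaler_nat. Qed.

Section BalancedMaps.
Variables (V : lmodType K) (f : 'M[K]_3 -> 'M[K]_3 -> V).
Hypothesis fB : balanced f.

Lemma balanced_zero_r x b y : inB b -> x * b = 0 -> f x (b * y) = 0.
Proof.
case: fB => fL1 [_ fM] bB xb0; rewrite -fM // xb0.
exact: (linear0 (linear_of (fun k x x' => fL1 k x x' y))).
Qed.

Lemma balanced_zero_l x b y : inB b -> b * y = 0 -> f (x * b) y = 0.
Proof.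
case: fB => _ [fL2 fM] bB by0; rewrite fM // by0.
exact: (linear0 (linear_of (fL2^~ x))).
Qed.

Lemma balanced_delta p a b q :
  f (delta_mx p a) (delta_mx b q) =
  \sum_i cent i a b *: f (delta_mx p (lidx i)) (delta_mx (ridx i) q).
Proof.
have [_ [_ fM]] := fB.
case_ord3 a; case_ord3 b;
  rewrite sum_ord3 /cent /lidx /ridx !mxE /= !(scale1r, scale0r, addr0, add0r) //.
- rewrite -(mul_delta_mx (2 : 'I_3) (1 : 'I_3) q) mulmxE.
  by rewrite (@balanced_zero_r _ _ _ inB_delta12) // -mulmxE mul_delta_mx_0.
- rewrite -(mul_delta_mx (2 : 'I_3) (2 : 'I_3) q) mulmxE.
  by rewrite (@balanced_zero_r _ _ _ inB_delta22) // -mulmxE mul_delta_mx_0.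
- rewrite -(mul_delta_mx (2 : 'I_3) (2 : 'I_3) q) mulmxE.
  by rewrite (@balanced_zero_r _ _ _ inB_delta22) // -mulmxE mul_delta_mx_0.
- rewrite -(mul_delta_mx (2 : 'I_3) p (2 : 'I_3)) mulmxE.
  by rewrite (@balanced_zero_l _ _ _ inB_delta22) // -mulmxE mul_delta_mx_0.
- rewrite -(mul_delta_mx (2 : 'I_3) p (2 : 'I_3)) mulmxE.
  by rewrite (@balanced_zero_l _ _ _ inB_delta22) // -mulmxE mul_delta_mx_0.
- rewrite -(mul_delta_mx (1 : 'I_3) p (2 : 'I_3)) mulmxE (fM _ _ _ inB_delta12).
  by rewrite -mulmxE mul_delta_mx.
Qed.

Definition tensor_lift (m : {ffun 'I_3 -> 'M[K]_3}) : V :=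
  \sum_i \sum_p \sum_q m i p q *: f (delta_mx p (lidx i)) (delta_mx (ridx i) q).

Lemma tensor_lift_linear k m m' :
  tensor_lift (k *: m + m') = k *: tensor_lift m + tensor_lift m'.
Proof.
rewrite /tensor_lift scaler_sumr -big_split; apply: eq_bigr => i _.
rewrite scaler_sumr -big_split; apply: eq_bigr => p _.
rewrite scaler_sumr -big_split; apply: eq_bigr => q _.
by rewrite !ffunE !mxE scalerDl scalerA.
Qed.

Lemma tensor_lift_tensor_map x y : tensor_lift (tensor_map x y) = f x y.
Proof.
have [fL1 [fL2 _]] := fB; have [tL1 [tL2 _]] := tensor_map_balanced.
have := @bilinear_sum_delta _ _ _ _ _ _ (fun x y => tensor_lift (tensor_map x y)).
move=> /(_ (fun k x x' y => etrans (congr1 _ (tL1 k x x' y)) (tensor_lift_linear _ _ _))).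
move=> /(_ (fun k x y y' => etrans (congr1 _ (tL2 k x y y')) (tensor_lift_linear _ _ _))).
move=> /(_ x y) /= ->; rewrite (bilinear_sum_delta fL1 fL2).
apply: eq_bigr => p _; apply: eq_bigr => a _; apply: eq_bigr => b _; apply: eq_bigr => q _.
rewrite tensor_map_delta balanced_delta; congr (_ *: _); apply: eq_bigr => i _.
by rewrite ffunE sum_scale_delta_mx.
Qed.

Lemma tensor_lift_unique (g : {ffun 'I_3 -> 'M[K]_3} -> V) :
  (forall k m m', g (k *: m + m') = k *: g m + g m') ->
  (forall x y, g (tensor_map x y) = f x y) -> forall m, g m = tensor_lift m.
Proof.
move=> gL gf m; pose G := linear_of gL.
rewrite {1}(ffun_sum_delta m) -[g]/(G : _ -> _) linear_sum; apply: eq_bigr => i _.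
have giL k a a' : g (ffun_delta i (k *: a + a')) =
    k *: g (ffun_delta i a) + g (ffun_delta i a').
  by rewrite -gL; congr g; apply/ffunP => j; rewrite !ffunE mulrnDl scalerMnr.
have -> : G (ffun_delta i (m i)) =
    \sum_p \sum_q m i p q *: g (ffun_delta i (delta_mx p q)) :=
  linear_sum_delta (linear_of giL) (m i).
by apply: eq_bigr => p _; apply: eq_bigr => q _; rewrite -tensor_map_idx gf.
Qed.

End BalancedMaps.

Lemma tensor_iso_A3 : tensor_iso_An K 3.
Proof.
exists tensor_map; split; [split|split].
- exact: tensor_map_balanced.
- move=> V f fB; exists (tensor_lift f); split; first exact: tensor_lift_linear.
  by split; [exact: tensor_lift_tensor_map | exact: tensor_lift_unique].
- by move=> c x y; apply/ffunP => i; rewrite !ffunE !mulrA.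
- by move=> c x y; apply/ffunP => i; rewrite !ffunE !mulrA.
Qed.

End TriangularExtension.

Theorem mainTheorem12 (K : fieldType) :
  left_free_rank K 3 /\
  tensor_iso_An K 3 /\
  ~ frobenius_ext K /\
  ~ (exists E : 'M[K]_3 -> 'M[K]_3, bimodule_projection E).
Proof.
split; first exact: left_free_rank3.
split; first exact: tensor_iso_A3.
split; [exact: not_frobenius_ext | exact: no_bimodule_projection].
Qed.
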